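(* Let $A$ be a vector space of dimension $n\geq 2$ over $\mathbb F$, and let $f,g:A\to\mathbb F$ be linear functions. Define $\circ:A\otimes A\to A$ by $x\circ y=f(y)x+g(x)y$ for all $x,y\in A$. Then $(A,\circ)$ is an anti-pre-Lie algebra if and only if $f=0$ or $g=2f$.
   Context: All vector spaces are finite-dimensional over a field $\mathbb F$ of characteristic $0$. An anti-pre-Lie algebra is a vector space $A$ with a bilinear operation $\circ$ such that, writing $[x,y]=x\circ y-y\circ x$, for all $x,y,z\in A$: (i) $x\circ(y\circ z)-y\circ(x\circ z)=[y,x]\circ z$, and (ii) $[x,y]\circ z+[y,z]\circ x+[z,x]\circ y=0$. *)

From HB Require Import structures.
From mathcomp Require Import all_boot all_order all_algebra.
Set Implicit Arguments. Unset Strict Implicit. Unset Printing Implicit Defensive.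
Import GRing.Theory.
Local Open Scope ring_scope.

Definition anti_pre_Lie (F : fieldType) (A : vectType F) (op : A -> A -> A) : Prop :=
  let br := fun x y => op x y - op y x in
  (forall x y z : A, forall a : F, op (a *: x + y) z = a *: op x z + op y z) /\
  (forall x y z : A, forall a : F, op x (a *: y + z) = a *: op x y + op x z) /\
  (forall x y z : A, op x (op y z) - op y (op x z) = op (br y x) z) /\
  (forall x y z : A, op (br x y) z + op (br y z) x + op (br z x) y = 0).

Definition fg_prod (F : fieldType) (A : vectType F) (f g : A -> F) (x y : A) : A :=
  f y *: x + g x *: y.

From HB Require Import structures.
From mathcomp Require Import all_boot all_order all_algebra.
From mathcomp Require Import ring.
From Stdlib Require Import Classical.
Import GRing.Theory.
Local Open Scope ring_scope.

(* Put h := 2 f - g.  Identity (ii) holds for every product x o y = f(y) x + g(x) y,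
   and the defect of identity (i) is f(z) (h(y) x - h(x) y) - (f(y) h(x) - f(x) h(y)) z.
   At z = x this defect is a combination of x and y whose y-coefficient is -f(x) h(x),
   so in dimension at least 2 the product f h vanishes identically; as f and h are
   linear, one of them is zero.  Conversely f = 0 or h = 0 kills the defect. *)

Lemma additive_mul_eq0 (U : zmodType) (R : idomainType) (p q : {additive U -> R}) :
  (forall x, p x * q x = 0) -> (forall x, p x = 0) \/ (forall x, q x = 0).
Proof.
move=> pq0; apply: NNPP => /not_or_and [/not_all_ex_not [a pa] /not_all_ex_not [b qb]].
have qa : q a = 0 by have /eqP := pq0 a; rewrite mulf_eq0 => /orP [] /eqP.
have pb : p b = 0 by have /eqP := pq0 b; rewrite mulf_eq0 => /orP [] /eqP.
have /eqP := pq0 (a + b); rewrite !raddfD qa pb add0r addr0 mulf_eq0.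
by case/orP => /eqP.
Qed.

Lemma dimv_full_le1 (F : fieldType) (A : vectType F) (x : A) :
  (forall y : A, y \in <[x]>%VS) -> (\dim {:A} <= 1)%N.
Proof.
move=> full; apply: leq_trans (leq_b1 (x != 0)); rewrite -dim_vline.
by apply: dimvS; apply/subvP => y _; apply: full.
Qed.

Section FgProduct.
Import VectorInternalTheory.

Context {F : fieldType} {A : vectType F} {f g : {linear A -> F^o}}.

Local Notation op := (fg_prod f g).
Local Notation h x := (2 * f x - g x).

Let lformD (l : {linear A -> F^o}) u v : l (u + v) = l u + l v.
Proof. exact: raddfD. Qed.
Let lformN (l : {linear A -> F^o}) u : l (- u) = - l u.
Proof. exact: raddfN. Qed.
Let lformZ (l : {linear A -> F^o}) a u : l (a *: u) = a * l u.
Proof. exact: linearZ. Qed.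
Let v2rD (u v : A) : v2r (u + v) = v2r u + v2r v.
Proof. exact: raddfD. Qed.
Let v2r0 : v2r (0 : A) = 0.
Proof. exact: raddf0. Qed.
Let v2rN (u : A) : v2r (- u) = - v2r u.
Proof. exact: raddfN. Qed.
Let v2rZ a (u : A) : v2r (a *: u) = a *: v2r u.
Proof. exact: linearZ. Qed.

Ltac coord_ring :=
  apply: v2r_inj; rewrite /fg_prod !(lformD, lformN, lformZ) ?(v2r0, v2rD, v2rN, v2rZ);
  apply/rowP => i; rewrite !mxE /=; ring.

Lemma fg_prodDl x y z a : op (a *: x + y) z = a *: op x z + op y z.
Proof. by coord_ring. Qed.

Lemma fg_prodDr x y z a : op x (a *: y + z) = a *: op x y + op x z.
Proof. by coord_ring. Qed.

Lemma fg_prod_bracket_cycle x y z :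
  let br u v := op u v - op v u in
  op (br x y) z + op (br y z) x + op (br z x) y = 0.
Proof. by move=> br; rewrite /br; coord_ring. Qed.

Lemma fg_prod_left_symm_defect x y z :
  op x (op y z) - op y (op x z) - op (op y x - op x y) z =
  f z *: (h y *: x - h x *: y) - (f y * h x - f x * h y) *: z.
Proof. by coord_ring. Qed.

Lemma fg_prod_left_symm_defect_diag x y :
  op x (op y x) - op y (op x x) - op (op y x - op x y) x =
  (2 * f x * h y - f y * h x) *: x - (f x * h x) *: y.
Proof. by coord_ring. Qed.

Lemma fg_prod_left_symm_mul_eq0 :
  (1 < \dim {:A})%N ->
  (forall x y z, op x (op y z) - op y (op x z) = op (op y x - op x y) z) ->
  forall x, f x * h x = 0.
Proof.
move=> dimA left_symm x; apply/eqP/negPn/negP => fhx_neq0.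
suff : (\dim {:A} <= 1)%N by rewrite leqNgt dimA.
apply: (@dimv_full_le1 _ _ x) => y.
have /eqP := fg_prod_left_symm_defect_diag x y.
rewrite left_symm subrr eq_sym subr_eq0 => /eqP fhx_y.
by rewrite -[y](scalerK fhx_neq0) -fhx_y !memvZ // memv_line.
Qed.

End FgProduct.

Theorem proposition2p7 (F : fieldType) (A : vectType F) (n : nat)
  (charF0 : [pchar F] =i pred0)
  (hdim : \dim (fullv : {vspace A}) = n) (hn : (2 <= n)%N)
  (f g : {linear A -> F^o}) :
  anti_pre_Lie (fg_prod f g) <->
  ((forall x : A, f x = 0) \/ (forall x : A, g x = 2 * f x)).
Proof.
split.
- case=> _ [_ [left_symm _]].
  have dimA : (1 < \dim {:A})%N by rewrite hdim.
  have fh0 := fg_prod_left_symm_mul_eq0 dimA left_symm.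
  case: (@additive_mul_eq0 _ _ f (2 \*: f \- g) fh0) => [f0 | h0]; first by left.
  by right => x; apply/eqP; rewrite eq_sym -subr_eq0; apply/eqP/h0.
- move=> f0_or_g2f; split; first exact: fg_prodDl.
  split; first exact: fg_prodDr.
  split; last exact: fg_prod_bracket_cycle.
  move=> x y z; apply/eqP; rewrite -subr_eq0 fg_prod_left_symm_defect.
  by case: f0_or_g2f => e; rewrite !e !(subrr, mulr0, mul0r, scale0r, scaler0).
Qed.
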